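(* Let $f:\mathbb{R}^d\to\mathbb{R}$ be convex, symmetric and sign invariant, $g(w,x)=f_\sigma(wx^\top-\bar w\bar x^\top)$, and suppose there is $\kappa>0$ with $$g(w,x)-g(\bar w,\bar x)\ge\kappa\|wx^\top-\bar w\bar x^\top\|_F\quad\text{for all }(w,x)\in\mathbb{R}^{d_1}\times\mathbb{R}^{d_2}.$$ Then for every $(w,x)$ with $wx^\top\ne\bar w\bar x^\top$ and every $Y\in\partial f_\sigma(wx^\top-\bar w\bar x^\top)$, $\sigma_1(Y)+\sigma_2(Y)\ge\kappa$.
   Context: Let $d=\min\{d_1,d_2\}$ and $\sigma:\mathbb{R}^{d_1\times d_2}\to\mathbb{R}^d_+$ give singular values in nonincreasing order (with $\sigma_2:=0$ if $d=1$). $f$ is symmetric if $f(\pi s)=f(s)$ for all permutation matrices $\pi$, sign invariant if $f(Ds)=f(s)$ for all diagonal $D$ with entries in $\{\pm1\}$; $f_\sigma=f\circ\sigma$ is then convex and $\partial f_\sigma$ is its convex subdifferential. $\bar w\in\mathbb{R}^{d_1}$, $\bar x\in\mathbb{R}^{d_2}$ are fixed; $\|\cdot\|_F$ is the Frobenius norm. *)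

From HB Require Import structures.
From mathcomp Require Import all_boot all_order all_algebra all_fingroup.
From Stdlib Require Import ClassicalEpsilon.
Set Implicit Arguments. Unset Strict Implicit. Unset Printing Implicit Defensive.
Import Order.TTheory GRing.Theory Num.Theory.
Local Open Scope ring_scope.

Section Defs.
Variable R : rcfType.

Definition rdiag (d1 d2 : nat) (s : 'rV[R]_(minn d1 d2)) : 'M[R]_(d1, d2) :=
  \matrix_(i < d1, j < d2)
    \sum_(k < minn d1 d2) (if ((k : nat) == i) && ((k : nat) == j) then s 0 k else 0).

Definition orthogonal_mx n (U : 'M[R]_n) : Prop := U *m U^T = 1%:M.

Definition is_svd (d1 d2 : nat) (A : 'M[R]_(d1, d2)) (s : 'rV[R]_(minn d1 d2)) : Prop :=
  (forall i : 'I_(minn d1 d2), 0 <= s 0 i) /\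
  (forall i j : 'I_(minn d1 d2), (i <= j)%N -> s 0 j <= s 0 i) /\
  exists (U : 'M[R]_d1) (V : 'M[R]_d2),
    orthogonal_mx U /\ orthogonal_mx V /\ A = U *m rdiag s *m V^T.

Definition sigma (d1 d2 : nat) (A : 'M[R]_(d1, d2)) : 'rV[R]_(minn d1 d2) :=
  epsilon (inhabits 0) (is_svd A).

(* k-th singular value (0-based), equal to 0 if k >= d *)
Definition sv (d1 d2 : nat) (A : 'M[R]_(d1, d2)) (k : nat) : R :=
  \sum_(i < minn d1 d2 | (i : nat) == k) sigma A 0 i.

Definition convex_fun n (f : 'rV[R]_n -> R) : Prop :=
  forall (x y : 'rV[R]_n) (t : R), 0 <= t -> t <= 1 ->
    f (t *: x + (1 - t) *: y) <= t * f x + (1 - t) * f y.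

Definition symmetric_fun n (f : 'rV[R]_n -> R) : Prop :=
  forall (p : 'S_n) (s : 'rV[R]_n), f (s *m perm_mx p) = f s.

Definition sign_invariant n (f : 'rV[R]_n -> R) : Prop :=
  forall (e : 'rV[R]_n) (s : 'rV[R]_n),
    (forall i, e 0 i = 1 \/ e 0 i = -1) -> f (s *m diag_mx e) = f s.

Definition f_sigma (d1 d2 : nat) (f : 'rV[R]_(minn d1 d2) -> R) (A : 'M[R]_(d1, d2)) : R :=
  f (sigma A).

Definition frob_inner m n (A B : 'M[R]_(m, n)) : R :=
  \sum_(i < m) \sum_(j < n) A i j * B i j.

Definition frob_norm m n (A : 'M[R]_(m, n)) : R := Num.sqrt (frob_inner A A).

Definition subdiff m n (F : 'M[R]_(m, n) -> R) (A Y : 'M[R]_(m, n)) : Prop :=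
  forall B : 'M[R]_(m, n), F A + frob_inner Y (B - A) <= F B.

End Defs.

From HB Require Import structures.
From mathcomp Require Import all_boot all_order all_algebra all_fingroup.
From mathcomp Require Import ring lra.
From mathcomp Require complex.
From Stdlib Require Import ClassicalEpsilon.
Set Implicit Arguments. Unset Strict Implicit. Unset Printing Implicit Defensive.
Import Order.TTheory GRing.Theory Num.Theory.
Local Open Scope ring_scope.

(* Write M = w x^T - wb xb^T as a b^T + c e^T with a orthogonal to c.  The
   subgradient inequality at B = 0 and the growth hypothesis give
   kappa |M|_F <= <Y, M>.  In the coordinates of an ordered singular value
   decomposition Y = U diag(t) V^T one has <Y, M> = sum_k t_k z_k, where
   z_0 <= |M|_F and, by Cauchy-Schwarz, every partial sum of z is at most
   2 |M|_F; Abel summation against the nonincreasing t_k then yields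
   <Y, M> <= (t_0 + t_1) |M|_F.  Most of the work is the existence of an ordered SVD over a
   real closed field, which is what makes [sigma] meaningful: the spectral
   theorem (a complex eigenvalue of a symmetric matrix is real, then Householder
   deflation), and then deflation of Y along a top eigenvector of Y^T Y. *)

Section Sums.
Variable R : realFieldType.

Lemma sum_mul_sqr_le (I : Type) (r : seq I) (x y : I -> R) :
  (\sum_(i <- r) x i * y i) ^+ 2 <=
  (\sum_(i <- r) x i ^+ 2) * (\sum_(i <- r) y i ^+ 2).
Proof.
set X := \sum_(i <- r) x i ^+ 2; set Y := \sum_(i <- r) y i ^+ 2.
set Z := \sum_(i <- r) x i * y i.
have discr t : 0 <= t ^+ 2 * X - 2 * t * Z + Y.
  have -> : t ^+ 2 * X - 2 * t * Z + Y = \sum_(i <- r) (t * x i - y i) ^+ 2.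
    rewrite /X /Y /Z mulr_sumr mulr_sumr -sumrN -!big_split /=.
    by apply: eq_bigr => i _; ring.
  by apply: sumr_ge0 => i _; exact: sqr_ge0.
have X0 : 0 <= X by apply: sumr_ge0 => i _; exact: sqr_ge0.
have [Xpos|] := ltrP 0 X.
  have := discr (Z / X).
  have -> : (Z / X) ^+ 2 * X - 2 * (Z / X) * Z + Y = (X * Y - Z ^+ 2) / X.
    by field; rewrite gt_eqF.
  by rewrite pmulr_lge0 ?invr_gt0 // subr_ge0.
move=> Xle0; have {Xle0}X0 : X = 0 by apply/eqP; rewrite eq_le Xle0 X0.
have [->|Zn0] := eqVneq Z 0; first by rewrite expr0n /= X0 mul0r.
(* with X = 0 the discriminant form is affine in t, and cannot stay nonnegative *)
have := discr ((Y + 1) / (2 * Z)).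
have -> : 2 * ((Y + 1) / (2 * Z)) * Z = Y + 1 by field; rewrite Zn0.
by rewrite X0 mulr0 add0r; lra.
Qed.

Lemma abel_sum_le (t z : nat -> R) (n : nat) :
  (forall k, 0 <= t k) -> (forall i j, (i <= j)%N -> t j <= t i) ->
  forall m (B : R), (m <= n)%N -> 0 <= B ->
  (forall j, (m < j <= n)%N -> \sum_(m <= k < j) z k <= B) ->
  \sum_(m <= k < n) t k * z k <= t m * B.
Proof.
move=> t_ge0 t_noninc m B.
elim: {m} (n - m)%N {-2}m (erefl (n - m)%N) B => [|l IH] m nm B le_mn B0 zB.
  by rewrite big_geq ?mulr_ge0 // -subn_eq0 nm.
have lt_mn : (m < n)%N by rewrite -subn_gt0 nm.
have zm : z m <= B by have := zB m.+1; rewrite ltnSn lt_mn big_nat1; apply.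
rewrite big_ltn //.
have : \sum_(m.+1 <= k < n) t k * z k <= t m.+1 * (B - z m).
  apply: IH => [|//||j /andP [lt_mj le_jn]]; first by rewrite subnS nm.
    by rewrite subr_ge0.
  rewrite lerBrDl -big_ltn ?(ltn_trans (ltnSn m)) //.
  by apply: zB; rewrite le_jn (ltn_trans (ltnSn m)).
have tSm := t_noninc m m.+1 (leqnSn m); have := t_ge0 m.+1.
have : 0 <= (t m - t m.+1) * (B - z m) by apply: mulr_ge0; rewrite subr_ge0.
nra.
Qed.

Lemma weighted_sum_le_top2 (t z : nat -> R) (n : nat) (F : R) :
  (forall k, 0 <= t k) -> (forall i j, (i <= j)%N -> t j <= t i) ->
  z 0%N <= F -> (forall j, \sum_(0 <= k < j) z k <= 2 * F) ->
  \sum_(0 <= k < n) t k * z k <= (t 0%N + t 1%N) * F.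
Proof.
move=> t_ge0 t_noninc z0F zF.
have F0 : 0 <= F by have := zF 0%N; rewrite big_geq // pmulr_rge0.
case: n => [|n]; first by rewrite big_geq // mulr_ge0 ?addr_ge0.
have tail : \sum_(1 <= k < n.+1) t k * z k <= t 1%N * (2 * F - z 0%N).
  apply: abel_sum_le => // [|j /andP [lt1j _]]; first by lra.
  by rewrite lerBrDl -big_ltn ?(ltn_trans (ltnSn 0)).
rewrite big_ltn //.
have t10 := t_noninc 0%N 1%N isT; have := t_ge0 1%N.
have : 0 <= (t 0%N - t 1%N) * (F - z 0%N) by apply: mulr_ge0; rewrite subr_ge0.
nra.
Qed.

End Sums.

Section Frobenius.
Variable R : rcfType.
Implicit Types (m n p : nat).

Lemma sum_mul_le_sqrt (I : Type) (r : seq I) (x y : I -> R) :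
  \sum_(i <- r) x i * y i <=
  Num.sqrt (\sum_(i <- r) x i ^+ 2) * Num.sqrt (\sum_(i <- r) y i ^+ 2).
Proof.
rewrite -sqrtrM; last by apply: sumr_ge0 => i _; exact: sqr_ge0.
apply: le_trans (ler_norm _) _.
rewrite -sqrtr_sqr ler_sqrt ?sum_mul_sqr_le //.
by rewrite mulr_ge0 // sumr_ge0 // => i _; exact: sqr_ge0.
Qed.

Lemma frob_innerE m n (A B : 'M[R]_(m, n)) : frob_inner A B = \tr (A^T *m B).
Proof.
rewrite /frob_inner /mxtrace exchange_big; apply: eq_bigr => j _.
by rewrite mxE; apply: eq_bigr => i _; rewrite mxE.
Qed.

Lemma frob_innerC m n (A B : 'M[R]_(m, n)) : frob_inner A B = frob_inner B A.
Proof. by rewrite !frob_innerE -mxtrace_tr trmx_mul trmxK. Qed.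

Lemma frob_inner_tr m n (A B : 'M[R]_(m, n)) : frob_inner A^T B^T = frob_inner A B.
Proof. by rewrite !frob_innerE trmxK -[LHS]mxtrace_tr trmx_mul trmxK mxtrace_mulC. Qed.

Lemma frob_innerDr m n (A B C : 'M[R]_(m, n)) :
  frob_inner A (B + C) = frob_inner A B + frob_inner A C.
Proof. by rewrite !frob_innerE mulmxDr mxtraceD. Qed.

Lemma frob_innerZr m n (a : R) (A B : 'M[R]_(m, n)) :
  frob_inner A (a *: B) = a * frob_inner A B.
Proof. by rewrite !frob_innerE -scalemxAr mxtraceZ. Qed.

Lemma frob_innerNr m n (A B : 'M[R]_(m, n)) : frob_inner A (- B) = - frob_inner A B.
Proof. by rewrite -scaleN1r frob_innerZr mulN1r. Qed.

Lemma frob_innerBr m n (A B C : 'M[R]_(m, n)) :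
  frob_inner A (B - C) = frob_inner A B - frob_inner A C.
Proof. by rewrite frob_innerDr frob_innerNr. Qed.

Lemma frob_innerDl m n (A B C : 'M[R]_(m, n)) :
  frob_inner (A + B) C = frob_inner A C + frob_inner B C.
Proof. by rewrite frob_innerC frob_innerDr !(frob_innerC C). Qed.

Lemma frob_innerZl m n (a : R) (A B : 'M[R]_(m, n)) :
  frob_inner (a *: A) B = a * frob_inner A B.
Proof. by rewrite frob_innerC frob_innerZr frob_innerC. Qed.

Lemma frob_innerBl m n (A B C : 'M[R]_(m, n)) :
  frob_inner (A - B) C = frob_inner A C - frob_inner B C.
Proof. by rewrite frob_innerC frob_innerBr !(frob_innerC C). Qed.

Lemma frob_inner0r m n (A : 'M[R]_(m, n)) : frob_inner A 0 = 0.
Proof. by rewrite frob_innerE mulmx0 mxtrace0. Qed.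

Lemma frob_inner_ge0 m n (A : 'M[R]_(m, n)) : 0 <= frob_inner A A.
Proof. by apply: sumr_ge0 => i _; apply: sumr_ge0 => j _; rewrite -expr2 sqr_ge0. Qed.

Lemma frob_inner_eq0 m n (A : 'M[R]_(m, n)) : (frob_inner A A == 0) = (A == 0).
Proof.
apply/idP/eqP => [|->]; last by rewrite frob_inner0r.
rewrite psumr_eq0 => [/allP A0|i _]; last first.
  by apply: sumr_ge0 => j _; rewrite -expr2 sqr_ge0.
apply/matrixP => i j; move: (A0 i (mem_index_enum _)).
rewrite /= psumr_eq0 => [/allP/(_ j (mem_index_enum _))|k _]; last by rewrite -expr2 sqr_ge0.
by rewrite /= mulf_eq0 orbb mxE => /eqP.
Qed.

Lemma frob_inner_mulmxl m n p (Q : 'M[R]_(m, n)) (A : 'M[R]_(n, p)) B :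
  frob_inner (Q *m A) B = frob_inner A (Q^T *m B).
Proof. by rewrite !frob_innerE trmx_mul mulmxA. Qed.

Lemma frob_inner_mulmxr m n p (A : 'M[R]_(m, n)) (P : 'M[R]_(n, p)) B :
  frob_inner (A *m P) B = frob_inner A (B *m P^T).
Proof. by rewrite !frob_innerE trmx_mul -mulmxA mxtrace_mulC mulmxA. Qed.

Lemma frob_inner_col n (u v : 'cV[R]_n) : u^T *m v = (frob_inner u v)%:M.
Proof. by rewrite frob_innerE trace_mx11 -mx11_scalar. Qed.

Lemma frob_inner_rank1 m n (a c : 'cV[R]_m) (b e : 'cV[R]_n) :
  frob_inner (a *m b^T) (c *m e^T) = frob_inner a c * frob_inner b e.
Proof.
by rewrite frob_inner_mulmxr trmxK -mulmxA frob_inner_col mul_mx_scalar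
  frob_innerZr [frob_inner e b]frob_innerC mulrC.
Qed.

Lemma frob_inner_mx_rank1 m n (Y : 'M[R]_(m, n)) (a : 'cV[R]_m) (b : 'cV[R]_n) :
  frob_inner Y (a *m b^T) = frob_inner a (Y *m b).
Proof. by rewrite frob_innerC frob_inner_mulmxr trmxK. Qed.

Lemma frob_inner_le m n (A B : 'M[R]_(m, n)) :
  frob_inner A B <= frob_norm A * frob_norm B.
Proof.
rewrite /frob_norm /frob_inner !pair_bigA /=.
have := sum_mul_le_sqrt (index_enum _) (fun ij : 'I_m * 'I_n => A ij.1 ij.2)
  (fun ij => B ij.1 ij.2).
by rewrite (eq_bigr _ (fun ij _ => expr2 (A ij.1 ij.2)))
  (eq_bigr _ (fun ij _ => expr2 (B ij.1 ij.2))).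
Qed.

Lemma frob_norm_gt0 m n (A : 'M[R]_(m, n)) : A != 0 -> 0 < frob_norm A.
Proof. by move=> A0; rewrite sqrtr_gt0 lt_def frob_inner_eq0 A0 frob_inner_ge0. Qed.

Lemma frob_inner_delta m n (A : 'M[R]_(m, n)) i j :
  frob_inner A (delta_mx i j) = A i j.
Proof.
rewrite /frob_inner (bigD1 i) //= (bigD1 j) //= !big1 => [|k ki|k kj].
- by rewrite mxE !eqxx mulr1 !addr0.
- by apply: big1 => l _; rewrite mxE (negbTE ki) mulr0.
- by rewrite mxE (negbTE kj) andbF mulr0.
Qed.

Lemma frob_inner_col_sum n (y : 'cV[R]_n) : frob_inner y y = \sum_i y i 0 ^+ 2.
Proof. by apply: eq_bigr => i _; rewrite big_ord1 expr2. Qed.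

Lemma frob_inner_col_mx m n p (a c : 'M[R]_(m, p)) (b e : 'M[R]_(n, p)) :
  frob_inner (col_mx a b) (col_mx c e) = frob_inner a c + frob_inner b e.
Proof. by rewrite !frob_innerE tr_col_mx mul_row_col mxtraceD. Qed.

End Frobenius.

Section Orthogonal.
Variable R : rcfType.

Lemma orthogonal_mxT n (U : 'M[R]_n) : orthogonal_mx U -> U^T *m U = 1%:M.
Proof. exact: mulmx1C. Qed.

Lemma orthogonal_mx1 n : orthogonal_mx (1%:M : 'M[R]_n).
Proof. by rewrite /orthogonal_mx trmx1 mulmx1. Qed.

Lemma orthogonal_mxM n (U V : 'M[R]_n) :
  orthogonal_mx U -> orthogonal_mx V -> orthogonal_mx (U *m V).
Proof.
by rewrite /orthogonal_mx trmx_mul mulmxA -(mulmxA U) => UU ->; rewrite mulmx1.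
Qed.

Lemma orthogonal_block1 n (Q : 'M[R]_n) :
  orthogonal_mx Q -> orthogonal_mx (block_mx (1%:M : 'M_1) 0 0 Q).
Proof.
rewrite /orthogonal_mx tr_block_mx mulmx_block !trmx0 trmx1 => ->.
by rewrite !mulmx0 !mul0mx !mulmx1 !addr0 !add0r -scalar_mx_block.
Qed.

Lemma block1_conj m n (U : 'M[R]_m) (V : 'M[R]_n) (D : 'M[R]_(m, n)) (c : R) :
  block_mx (1%:M : 'M_1) 0 0 U *m block_mx (c%:M : 'M_1) 0 0 D *m
    (block_mx (1%:M : 'M_1) 0 0 V)^T = block_mx (c%:M : 'M_1) 0 0 (U *m D *m V^T).
Proof.
rewrite tr_block_mx !mulmx_block !trmx0 trmx1 !mulmx0 !mul0mx !mulmx1 !mul1mx.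
by rewrite !addr0 !add0r mul0mx.
Qed.

Lemma frob_inner_orthogonal m n (Q : 'M[R]_m) (A B : 'M[R]_(m, n)) :
  Q^T *m Q = 1%:M -> frob_inner (Q *m A) (Q *m B) = frob_inner A B.
Proof. by move=> QQ; rewrite frob_inner_mulmxl mulmxA QQ mul1mx. Qed.

Lemma orthogonal_mx_e0 n (v : 'cV[R]_n.+1) : frob_inner v v = 1 ->
  exists H : 'M[R]_n.+1, orthogonal_mx H /\ H *m delta_mx 0 0 = v.
Proof.
move=> vv; set e : 'cV[R]_n.+1 := delta_mx 0 0; pose w := v - e.
have ee : frob_inner e e = 1 by rewrite frob_inner_delta mxE.
have ve : frob_inner v e = v 0 0 by rewrite frob_inner_delta.
have we : frob_inner w e = v 0 0 - 1 by rewrite frob_innerBl ve ee.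
pose c := frob_inner w w.
have cE : c = 2 - 2 * v 0 0.
  by rewrite /c frob_innerBl !frob_innerBr vv ee (frob_innerC e) ve; ring.
have [c0|cn0] := eqVneq c 0.
  exists 1%:M; split; first exact: orthogonal_mx1.
  by move/eqP: c0; rewrite mul1mx frob_inner_eq0 subr_eq0 => /eqP.
pose H := 1%:M - (2 / c) *: (w *m w^T).
have HT : H^T = H by rewrite /H linearB /= linearZ /= trmx_mul trmxK trmx1.
exists H; split.
  rewrite /orthogonal_mx HT /H mulmxBl !mulmxBr mul1mx mulmx1 -!scalemxAl.
  rewrite -!scalemxAr !mulmxA -(mulmxA w) frob_inner_col -/c mul_mx_scalar.
  rewrite -scalemxAl !scalerA.
  have -> : 2 / c * (2 / c * c) = 2 / c + 2 / c by field.
  by rewrite mul1mx scalerDl opprB addrK subrK.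
rewrite /H mulmxBl mul1mx -scalemxAl -mulmxA frob_inner_col we mul_mx_scalar scalerA.
have -> : 2 / c * (v 0 0 - 1) = -1 by rewrite cE; field; rewrite -cE.
by rewrite scaleN1r opprK /w addrC subrK.
Qed.

Lemma first_col_block m n (T : 'M[R]_(1 + m, 1 + n)) (s : R) :
  T *m delta_mx 0 0 = s *: (delta_mx 0 0 : 'cV_(1 + m)) -> ulsubmx T = s%:M /\ dlsubmx T = 0.
Proof.
have l0 k (j : 'I_1) : lshift k j = 0 by apply/val_inj; rewrite /= [j]ord1.
move=> /matrixP Te0; split; apply/matrixP => i j.
- have := Te0 0 0; rewrite -colE !mxE eqxx mulr1 => <-.
  by rewrite [i]ord1 [j]ord1 !l0 mulr1n.
- have := Te0 (rshift 1 i) 0; rewrite -colE !mxE mulr0 => <-.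
  by rewrite [j]ord1 l0.
Qed.

Lemma block_mx_e0 m n (T : 'M[R]_(1 + m, 1 + n)) (s : R) :
  T *m delta_mx 0 0 = s *: (delta_mx 0 0 : 'cV_(1 + m)) ->
  T^T *m delta_mx 0 0 = s *: (delta_mx 0 0 : 'cV_(1 + n)) ->
  T = block_mx s%:M 0 0 (drsubmx T).
Proof.
move=> /first_col_block [Tul Tdl] /first_col_block [_ Tur].
by rewrite -{1}[T]submxK Tul Tdl -[ursubmx T]trmxK trmx_ursub Tur trmx0.
Qed.

Lemma frob_norm_orthogonal m n (Q : 'M[R]_m) (A : 'M[R]_(m, n)) :
  Q^T *m Q = 1%:M -> frob_norm (Q *m A) = frob_norm A.
Proof. by move=> QQ; rewrite /frob_norm frob_inner_orthogonal. Qed.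

End Orthogonal.

Section RealEigenvector.
Import complex.
Variable R : rcfType.
Local Notation Re := (@complex.Re R).
Local Notation Im := (@complex.Im R).

Lemma Re_sum (I : Type) (r : seq I) (F : I -> R[i]) :
  Re (\sum_(i <- r) F i) = \sum_(i <- r) Re (F i).
Proof. exact: (raddf_sum (@complex.Re R : Rcomplex R -> R)). Qed.

Lemma Im_sum (I : Type) (r : seq I) (F : I -> R[i]) :
  Im (\sum_(i <- r) F i) = \sum_(i <- r) Im (F i).
Proof. exact: (raddf_sum (@complex.Im R : Rcomplex R -> R)). Qed.

Lemma Re_mulmx_real n (z : 'rV[R[i]]_n) (S : 'M[R]_n) :
  map_mx Re (z *m map_mx (real_complex R) S) = map_mx Re z *m S.
Proof.
apply/rowP => j; rewrite !mxE Re_sum; apply: eq_bigr => k _.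
by rewrite !mxE; case: (z 0 k) => p q /=; rewrite mulr0 subr0.
Qed.

Lemma Im_mulmx_real n (z : 'rV[R[i]]_n) (S : 'M[R]_n) :
  map_mx Im (z *m map_mx (real_complex R) S) = map_mx Im z *m S.
Proof.
apply/rowP => j; rewrite !mxE Im_sum; apply: eq_bigr => k _.
by rewrite !mxE; case: (z 0 k) => p q /=; rewrite mulr0 add0r.
Qed.

Lemma Re_scalemx n (mu : R[i]) (z : 'rV[R[i]]_n) :
  map_mx Re (mu *: z) = Re mu *: map_mx Re z - Im mu *: map_mx Im z.
Proof. by apply/rowP => j; rewrite !mxE; case: mu; case: (z 0 j). Qed.

Lemma Im_scalemx n (mu : R[i]) (z : 'rV[R[i]]_n) :
  map_mx Im (mu *: z) = Re mu *: map_mx Im z + Im mu *: map_mx Re z.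
Proof. by apply/rowP => j; rewrite !mxE; case: mu => a b; case: (z 0 j) => p q /=; ring. Qed.

(* If z = x + iy is a complex eigenvector for the eigenvalue a + ib, symmetry
   of S forces b (|x|^2 + |y|^2) = 0. *)
Lemma symmetric_eigenrow n (S : 'M[R]_n) : (0 < n)%N -> S^T = S ->
  exists a (u : 'rV[R]_n), u *m S = a *: u /\ u != 0.
Proof.
move=> n_gt0 SS.
have [mu /eigenvalueP [z zS z0]] := Theorem7' (map_mx (real_complex R) S) n_gt0.
pose x := map_mx Re z; pose y := map_mx Im z; pose a := Re mu; pose b := Im mu.
have xS : x *m S = a *: x - b *: y by rewrite -Re_mulmx_real zS Re_scalemx.
have yS : y *m S = a *: y + b *: x by rewrite -Im_mulmx_real zS Im_scalemx.
have S_selfadj : frob_inner (x *m S) y = frob_inner x (y *m S).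
  by rewrite frob_inner_mulmxr SS.
have xy0 : frob_inner x x + frob_inner y y != 0.
  apply: contra z0 => /eqP /eqP; rewrite paddr_eq0 ?frob_inner_ge0 //.
  rewrite !frob_inner_eq0 => /andP [/eqP x0 /eqP y0]; apply/eqP/rowP => j.
  have /rowP /(_ j) := x0; have /rowP /(_ j) := y0; rewrite !mxE.
  by case: (z 0 j) => p q /= -> ->.
have b0 : b = 0.
  move: S_selfadj; rewrite xS yS frob_innerBl frob_innerDr !frob_innerZl !frob_innerZr.
  move=> /eqP; rewrite -subr_eq0.
  have -> : a * frob_inner x y - b * frob_inner y y -
    (a * frob_inner x y + b * frob_inner x x) = - b * (frob_inner x x + frob_inner y y).
    by ring.
  by rewrite mulf_eq0 (negbTE xy0) orbF oppr_eq0 => /eqP.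
have [x0|xn0] := eqVneq x 0.
  exists a, y; split; first by rewrite yS b0 scale0r addr0.
  by apply: contra xy0 => /eqP ->; rewrite x0 !frob_inner0r addr0.
by exists a, x; rewrite xS b0 scale0r subr0.
Qed.

End RealEigenvector.

Section Spectral.
Variable R : rcfType.

Lemma symmetric_unit_eigenvector n (S : 'M[R]_n.+1) : S^T = S ->
  exists a (v : 'cV[R]_n.+1), S *m v = a *: v /\ frob_inner v v = 1.
Proof.
move=> SS; have [a [u [uS u0]]] := symmetric_eigenrow (ltn0Sn n) SS.
have Su : S *m u^T = a *: u^T by rewrite -{1}SS -trmx_mul uS linearZ.
have uu_gt0 : 0 < frob_inner u u by rewrite lt_def frob_inner_eq0 u0 frob_inner_ge0.
exists a, ((Num.sqrt (frob_inner u u))^-1 *: u^T); split.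
  by rewrite -scalemxAr Su scalerA mulrC -scalerA.
rewrite frob_innerZl frob_innerZr mulrA -expr2 exprVn sqr_sqrtr ?ltW //.
by rewrite frob_inner_tr mulVf ?gt_eqF.
Qed.

Lemma diag_mx_row1 n (a : R) (mu : 'rV[R]_n) :
  diag_mx (row_mx (a%:M : 'rV_1) mu) = block_mx (a%:M : 'M_1) 0 0 (diag_mx mu).
Proof.
rewrite diag_mx_row; congr block_mx.
by apply/matrixP => i j; rewrite [i]ord1 [j]ord1 !mxE.
Qed.

Lemma symmetric_spectral n (S : 'M[R]_n) : S^T = S ->
  exists (Q : 'M[R]_n) (mu : 'rV[R]_n), orthogonal_mx Q /\ S = Q *m diag_mx mu *m Q^T.
Proof.
elim: n S => [|n IH] S SS.
  by exists 1%:M, 0; split; [exact: orthogonal_mx1 | rewrite !flatmx0].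
have [a [v [Sv vv]]] := symmetric_unit_eigenvector SS.
have [H [HH He]] := orthogonal_mx_e0 vv.
have HTH := orthogonal_mxT HH.
pose T : 'M[R]_n.+1 := H^T *m S *m H.
have Te : T *m delta_mx 0 0 = a *: (delta_mx 0 0 : 'cV_n.+1).
  by rewrite /T -!mulmxA He Sv -scalemxAr -He mulmxA HTH mul1mx.
have TT : T^T = T by rewrite /T !trmx_mul trmxK SS mulmxA.
have ET : T = block_mx (a%:M : 'M_1) 0 0 (drsubmx (T : 'M_(1 + n))).
  by apply: block_mx_e0; rewrite ?TT.
have T'T' : (drsubmx (T : 'M_(1 + n)))^T = drsubmx (T : 'M_(1 + n)).
  by rewrite trmx_drsub TT.
have [Q' [mu' [QQ' ES']]] := IH _ T'T'.
exists (H *m block_mx (1%:M : 'M_1) 0 0 Q'), (row_mx (a%:M : 'rV_1) mu'); split.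
  exact/orthogonal_mxM/orthogonal_block1.
have -> : S = H *m T *m H^T by rewrite /T !mulmxA HH mul1mx -mulmxA HH mulmx1.
by rewrite ET ES' -block1_conj diag_mx_row1 trmx_mul !mulmxA.
Qed.

End Spectral.

Section SVD.
Variable R : rcfType.

Definition rect_diag_mx m n (s : nat -> R) : 'M[R]_(m, n) :=
  \matrix_(i, j) if (i : nat) == j then s i else 0.

Definition singular_seq m n (s : nat -> R) : Prop :=
  [/\ forall k, 0 <= s k, forall i j, (i <= j)%N -> s j <= s i &
      forall k, (minn m n <= k)%N -> s k = 0].

Definition sqr_opnorm_le m n (Y : 'M[R]_(m, n)) (lam : R) : Prop :=
  forall x : 'cV_n, frob_inner (Y *m x) (Y *m x) <= lam * frob_inner x x.

Lemma frob_inner_diag n (mu : 'rV[R]_n) (y : 'cV[R]_n) :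
  frob_inner y (diag_mx mu *m y) = \sum_i mu 0 i * y i 0 ^+ 2.
Proof.
by apply: eq_bigr => i _; rewrite big_ord1 mul_diag_mx mxE; ring.
Qed.

Lemma diag_mx_delta n (mu : 'rV[R]_n) (k : 'I_n) :
  diag_mx mu *m delta_mx k 0 = mu 0 k *: (delta_mx k 0 : 'cV_n).
Proof.
apply/matrixP => i j; rewrite mul_diag_mx !mxE.
by case: eqVneq => [->|]; rewrite ?mulr0 ?andFb // andTb mulrC.
Qed.

Lemma gram_top_eigen m n (Y : 'M[R]_(m, n.+1)) :
  exists lam (v : 'cV[R]_n.+1),
    [/\ frob_inner v v = 1, Y^T *m Y *m v = lam *: v & sqr_opnorm_le Y lam].
Proof.
have SS : (Y^T *m Y)^T = Y^T *m Y by rewrite trmx_mul trmxK.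
have [Q [mu [QQ ES]]] := symmetric_spectral SS.
have QTQ := orthogonal_mxT QQ.
pose k := [arg max_(i > ord0) mu 0 i]%O.
have mu_le i : mu 0 i <= mu 0 k by rewrite /k; case: arg_maxP => // j _; apply.
exists (mu 0 k), (Q *m delta_mx k 0); split.
- by rewrite frob_inner_orthogonal // frob_inner_delta mxE !eqxx.
- by rewrite ES -!mulmxA (mulmxA Q^T) QTQ mul1mx diag_mx_delta -scalemxAr.
move=> x; rewrite frob_inner_mulmxl mulmxA ES -!mulmxA frob_innerC.
rewrite frob_inner_mulmxl frob_innerC frob_inner_diag.
rewrite -(frob_inner_orthogonal x x (_ : Q^T^T *m Q^T = 1%:M)) ?trmxK //.
rewrite frob_inner_col_sum mulr_sumr; apply: ler_sum => i _.
by rewrite ler_wpM2r ?sqr_ge0.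
Qed.

Lemma sqr_opnorm_le0 m n (Y : 'M[R]_(m, n)) lam :
  sqr_opnorm_le Y lam -> lam <= 0 -> Y = 0.
Proof.
move=> Ylam lam_le0; apply/matrixP => i j.
have := Ylam (delta_mx j 0); rewrite frob_inner_delta mxE !eqxx mulr1 -colE => Yj.
have /eqP : frob_inner (col j Y) (col j Y) = 0.
  by apply/eqP; rewrite eq_le frob_inner_ge0 (le_trans Yj lam_le0).
by rewrite frob_inner_eq0 => /eqP /matrixP /(_ i 0); rewrite !mxE.
Qed.

Lemma sqr_opnorm_le_orthogonal m n (Y : 'M[R]_(m, n)) U V lam :
  orthogonal_mx U -> orthogonal_mx V -> sqr_opnorm_le Y lam ->
  sqr_opnorm_le (U^T *m Y *m V) lam.
Proof.
move=> UU VV Ylam x; rewrite -!mulmxA frob_inner_orthogonal ?trmxK //.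
by rewrite -(frob_inner_orthogonal x x (orthogonal_mxT VV)).
Qed.

Lemma sqr_opnorm_le_block m n (c : R) (D : 'M[R]_(m, n)) lam :
  sqr_opnorm_le (block_mx (c%:M : 'M_1) 0 0 D) lam -> sqr_opnorm_le D lam.
Proof.
move=> Blam x; have := Blam (col_mx 0 x).
by rewrite mul_block_col !mulmx0 mul0mx !add0r !frob_inner_col_mx !frob_inner0r !add0r.
Qed.

Lemma rect_diag_mx_e0 m n (s : nat -> R) :
  rect_diag_mx m.+1 n.+1 s *m delta_mx 0 0 = s 0%N *: (delta_mx 0 0 : 'cV_m.+1).
Proof.
apply/colP => i; rewrite -colE !mxE eq_sym.
by case: i => [[|i] Hi]; rewrite /= ?mulr1 ?mulr0.
Qed.

Lemma rect_diag_mx_cons m n (s : nat -> R) (c : R) :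
  rect_diag_mx (1 + m) (1 + n) (fun k => if k is k'.+1 then s k' else c) =
  block_mx (c%:M : 'M_1) 0 0 (rect_diag_mx m n s).
Proof.
apply/matrixP => i j.
case: (split_ordP i) => i' ->; case: (split_ordP j) => j' ->;
  rewrite ?block_mxEul ?block_mxEur ?block_mxEdl ?block_mxEdr !mxE /=.
- by rewrite [i']ord1 [j']ord1.
- by rewrite [i']ord1.
- by rewrite [j']ord1.
- by rewrite eqSS.
Qed.

Lemma rect_diag_mx0 m n : rect_diag_mx m n (fun=> 0) = 0.
Proof. by apply/matrixP => i j; rewrite !mxE; case: eqP. Qed.

Lemma svd_top_value_le m n (Y : 'M[R]_(m, n)) U V (s : nat -> R) lam :
  orthogonal_mx U -> orthogonal_mx V -> (forall k, (minn m n <= k)%N -> s k = 0) ->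
  Y = U *m rect_diag_mx m n s *m V^T -> 0 <= lam -> sqr_opnorm_le Y lam ->
  s 0%N ^+ 2 <= lam.
Proof.
case: m n Y U V s => [|m] [|n] Y U V s UU VV s_0 EY lam_ge0 Ylam;
  try by rewrite s_0 ?expr0n ?minn0.
have := Ylam (V *m delta_mx 0 0).
rewrite EY -!mulmxA (mulmxA V^T) (orthogonal_mxT VV) mul1mx rect_diag_mx_e0.
rewrite -scalemxAr frob_innerZl frob_innerZr !frob_inner_orthogonal ?orthogonal_mxT //.
by rewrite !frob_inner_delta !mxE !eqxx /= !mulr1 -expr2.
Qed.

Lemma svd_deflation m n (Y : 'M[R]_(m.+1, n.+1)) lam (v : 'cV[R]_n.+1) :
  0 < lam -> frob_inner v v = 1 -> Y^T *m Y *m v = lam *: v ->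
  exists H1 H2 (D : 'M[R]_(m, n)), [/\ orthogonal_mx H1, orthogonal_mx H2 &
    Y = H1 *m block_mx ((Num.sqrt lam)%:M : 'M_1) 0 0 D *m H2^T].
Proof.
move=> lam_gt0 vv Yv; set sig := Num.sqrt lam.
have sig_gt0 : 0 < sig by rewrite sqrtr_gt0.
have sig2 : sig ^+ 2 = lam by rewrite sqr_sqrtr // ltW.
pose u := sig^-1 *: (Y *m v).
have uu : frob_inner u u = 1.
  rewrite frob_innerZl frob_innerZr frob_inner_mulmxl mulmxA Yv frob_innerZr vv.
  by rewrite mulr1 mulrA -expr2 exprVn sig2 mulVf ?gt_eqF.
have Yv_u : Y *m v = sig *: u by rewrite scalerA mulfV ?gt_eqF ?scale1r.
have YTu : Y^T *m u = sig *: v.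
  rewrite -scalemxAr mulmxA Yv scalerA -sig2 expr2 mulKf ?gt_eqF //.
have [H1 [HH1 He1]] := orthogonal_mx_e0 uu.
have [H2 [HH2 He2]] := orthogonal_mx_e0 vv.
pose T : 'M[R]_(m.+1, n.+1) := H1^T *m Y *m H2.
have ET : T = block_mx (sig%:M : 'M_1) 0 0 (drsubmx (T : 'M_(1 + m, 1 + n))).
  apply: block_mx_e0.
    by rewrite -!mulmxA He2 Yv_u -scalemxAr -He1 mulmxA orthogonal_mxT ?mul1mx.
  rewrite !trmx_mul trmxK -!mulmxA He1 YTu -scalemxAr -He2 mulmxA.
  by rewrite orthogonal_mxT ?mul1mx.
exists H1, H2, (drsubmx (T : 'M_(1 + m, 1 + n))); split => //.
by rewrite -ET /T !mulmxA HH1 mul1mx -mulmxA HH2 mulmx1.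
Qed.

Lemma rect_svd m n (Y : 'M[R]_(m, n)) : exists U V (s : nat -> R),
  [/\ orthogonal_mx U, orthogonal_mx V, singular_seq m n s &
      Y = U *m rect_diag_mx m n s *m V^T].
Proof.
have svd0 m' n' (Y0 : 'M[R]_(m', n')) : Y0 = 0 -> exists U V (s : nat -> R),
    [/\ orthogonal_mx U, orthogonal_mx V, singular_seq m' n' s &
        Y0 = U *m rect_diag_mx m' n' s *m V^T].
  move=> ->; exists 1%:M, 1%:M, (fun=> 0).
  by split; rewrite ?rect_diag_mx0 ?mulmx0 ?mul0mx //; exact: orthogonal_mx1.
elim: m n Y => [|m IH] n Y; first by apply: svd0; rewrite flatmx0.
case: n Y => [|n] Y; first by apply: svd0; rewrite thinmx0.
have [lam [v [vv Yv Ylam]]] := gram_top_eigen Y.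
have [lam_le0|lam_gt0] := lerP lam 0; first exact/svd0/(sqr_opnorm_le0 Ylam).
have [H1 [H2 [D [HH1 HH2 EY]]]] := svd_deflation lam_gt0 vv Yv.
have Dlam : sqr_opnorm_le D lam.
  apply: (sqr_opnorm_le_block (c := Num.sqrt lam)).
  have := sqr_opnorm_le_orthogonal HH1 HH2 Ylam.
  by rewrite EY !mulmxA (orthogonal_mxT HH1) mul1mx -mulmxA (orthogonal_mxT HH2) mulmx1.
have [U [V [s [UU VV [s_ge0 s_noninc s_0] ED]]]] := IH n D.
have s0_le : s 0%N <= Num.sqrt lam.
  rewrite -(ger0_norm (s_ge0 0%N)) -sqrtr_sqr ler_sqrt ?(ltW lam_gt0) //.
  exact: svd_top_value_le UU VV s_0 ED (ltW lam_gt0) Dlam.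
exists (H1 *m block_mx (1%:M : 'M_1) 0 0 U), (H2 *m block_mx (1%:M : 'M_1) 0 0 V),
  (fun k => if k is k'.+1 then s k' else Num.sqrt lam).
split; first exact/orthogonal_mxM/orthogonal_block1.
- exact/orthogonal_mxM/orthogonal_block1.
- split.
  + by case=> [|k]; rewrite ?sqrtr_ge0.
  + case=> [|i] [|j] //= le_ij; last exact: s_noninc.
    exact: le_trans (s_noninc 0%N j isT) s0_le.
  + by case=> [|k]; rewrite minnSS // ltnS => /s_0.
by rewrite rect_diag_mx_cons EY ED -block1_conj trmx_mul !mulmxA.
Qed.

End SVD.

Section SingularValues.
Variable R : rcfType.

Lemma sum_ord_pred1 N (f : nat -> R) k :
  \sum_(i < N | (i : nat) == k) f i = if (k < N)%N then f k else 0.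
Proof.
case: ifP => kN; first by rewrite (big_pred1 (Ordinal kN)).
rewrite big_pred0 // => i /=; apply: contraFF kN => /eqP <-; exact: ltn_ord.
Qed.

Lemma eq_rect_diag_mx m n (s t : nat -> R) :
  s =1 t -> rect_diag_mx m n s = rect_diag_mx m n t.
Proof. by move=> st; apply/matrixP => i j; rewrite !mxE st. Qed.

Lemma rdiag_rect_diag_mx d1 d2 (s : 'rV[R]_(minn d1 d2)) :
  rdiag s = rect_diag_mx d1 d2 (fun k => \sum_(i < minn d1 d2 | (i : nat) == k) s 0 i).
Proof.
apply/matrixP => i j; rewrite !mxE; case: eqP => [ij|ij].
  by rewrite [RHS]big_mkcond; apply: eq_bigr => k _; rewrite -ij andbb.
apply: big1 => k _; case: eqP => // ki; case: eqP => // kj.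
by case: ij; rewrite -ki -kj.
Qed.

Lemma is_svd_exists d1 d2 (Y : 'M[R]_(d1, d2)) : exists s, is_svd Y s.
Proof.
have [U [V [s [UU VV [s_ge0 s_noninc s_0] EY]]]] := rect_svd Y.
exists (\row_k s k); split=> [i|]; first by rewrite mxE.
split=> [i j ij|]; first by rewrite !mxE; exact: s_noninc.
exists U, V; split=> //; split=> //.
rewrite rdiag_rect_diag_mx EY; congr (_ *m _ *m _); apply: eq_rect_diag_mx => k.
under eq_bigr do rewrite mxE.
by rewrite (sum_ord_pred1 _ s); case: ltnP => // /s_0.
Qed.

Lemma sigma_is_svd d1 d2 (Y : 'M[R]_(d1, d2)) : is_svd Y (sigma Y).
Proof. exact: epsilon_spec (is_svd_exists Y). Qed.

Lemma sv_svd d1 d2 (Y : 'M[R]_(d1, d2)) : exists U V,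
  [/\ orthogonal_mx U, orthogonal_mx V, singular_seq d1 d2 (sv Y) &
      Y = U *m rect_diag_mx d1 d2 (sv Y) *m V^T].
Proof.
have [s_ge0 [s_noninc [U [V [UU [VV EY]]]]]] := sigma_is_svd Y.
exists U, V; split=> //; last by rewrite {1}EY rdiag_rect_diag_mx.
have sv_out k : (minn d1 d2 <= k)%N -> sv Y k = 0.
  move=> le_k; apply: big_pred0 => i /=; apply: contraTF le_k => /eqP <-.
  by rewrite -ltnNge.
split=> [k|i j ij|//]; first by apply: sumr_ge0 => i _; exact: s_ge0.
have [jd|/sv_out ->] := ltnP j (minn d1 d2); last by apply: sumr_ge0 => k _; exact: s_ge0.
have id := leq_ltn_trans ij jd.
by rewrite /sv (big_pred1 (Ordinal jd)) // (big_pred1 (Ordinal id)) //; exact: s_noninc.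
Qed.

End SingularValues.

Section RankTwo.
Variable R : rcfType.

(* the coordinates of p, extended by 0 to all indices k : nat *)
Definition coordn n (p : 'cV[R]_n) (k : nat) : R := \sum_(i < n | (i : nat) == k) p i 0.

Lemma coordn_ord n (p : 'cV[R]_n) (i : 'I_n) : coordn p i = p i 0.
Proof. exact: big_pred1. Qed.

Lemma coordn_out n (p : 'cV[R]_n) k : (n <= k)%N -> coordn p k = 0.
Proof.
move=> le_nk; apply: big_pred0 => i /=; apply: contraTF le_nk => /eqP <-.
by rewrite -ltnNge.
Qed.

Lemma sum_coordn_sqr_le n (p : 'cV[R]_n) j :
  \sum_(0 <= k < j) coordn p k ^+ 2 <= frob_inner p p.
Proof.
have coordn_sqr_ge0 k : 0 <= coordn p k ^+ 2 := sqr_ge0 _.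
apply: (@le_trans _ _ (\sum_(0 <= k < j + n) coordn p k ^+ 2)).
  rewrite [X in _ <= X](big_cat_nat (n := j)) ?leq_addr //= lerDl.
  exact: sumr_ge0.
rewrite (big_cat_nat (n := n)) ?leq_addl //= [X in _ + X]big_nat_cond.
rewrite [X in _ + X]big1 ?addr0.
  rewrite big_mkord frob_inner_col_sum; under eq_bigr do rewrite coordn_ord; exact: lexx.
by move=> k /andP [/andP [le_nk _] _]; rewrite coordn_out // expr0n.
Qed.

Lemma sum_coordn_mul_le m n (x : 'cV[R]_m) (y : 'cV[R]_n) j :
  \sum_(0 <= k < j) coordn x k * coordn y k <= frob_norm x * frob_norm y.
Proof.
apply: le_trans (sum_mul_le_sqrt _ _ _) _.
by apply: ler_pM; rewrite ?sqrtr_ge0 // ler_sqrt ?frob_inner_ge0 // sum_coordn_sqr_le.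
Qed.

Lemma frob_inner_rect_diag m n (t : nat -> R) (p : 'cV[R]_m) (q : 'cV[R]_n) :
  frob_inner p (rect_diag_mx m n t *m q) = \sum_(0 <= k < m) t k * (coordn p k * coordn q k).
Proof.
rewrite big_mkord; apply: eq_bigr => i _; rewrite big_ord1 coordn_ord mxE.
rewrite mulr_sumr /coordn mulr_sumr [RHS]mulr_sumr [RHS]big_mkcond /=.
apply: eq_bigr => j _; rewrite !mxE eq_sym; case: eqP => _; first by ring.
by rewrite mul0r mulr0.
Qed.

Lemma frob_inner_svd_rank1 m n (U : 'M[R]_m) (V : 'M[R]_n) (t : nat -> R)
    (x : 'cV[R]_m) (y : 'cV[R]_n) :
  frob_inner (U *m rect_diag_mx m n t *m V^T) (x *m y^T) =
    \sum_(0 <= k < m) t k * (coordn (U^T *m x) k * coordn (V^T *m y) k).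
Proof.
by rewrite frob_inner_mx_rank1 -!mulmxA frob_innerC frob_inner_mulmxl frob_innerC
  frob_inner_rect_diag.
Qed.

Lemma rank2_inner_le m n (U : 'M[R]_m) (V : 'M[R]_n) (t : nat -> R)
    (a c : 'cV[R]_m) (b e : 'cV[R]_n) :
  orthogonal_mx U -> orthogonal_mx V ->
  (forall k, 0 <= t k) -> (forall i j, (i <= j)%N -> t j <= t i) ->
  frob_inner a c = 0 ->
  frob_inner (U *m rect_diag_mx m n t *m V^T) (a *m b^T + c *m e^T) <=
    (t 0%N + t 1%N) * frob_norm (a *m b^T + c *m e^T).
Proof.
have frob_norm0 p q : frob_norm (0 : 'M[R]_(p, q)) = 0 by rewrite /frob_norm frob_inner0r sqrtr0.
case: m U a c => [|m] U a c; first by rewrite [_ + _]flatmx0 frob_inner0r frob_norm0 mulr0.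
case: n V b e => [|n] V b e; first by rewrite [_ + _]thinmx0 frob_inner0r frob_norm0 mulr0.
move=> UU VV t_ge0 t_noninc ac; set M := _ + _; set F := frob_norm M.
pose p := U^T *m a; pose q := V^T *m b; pose r := U^T *m c; pose g := V^T *m e.
pose z k := coordn p k * coordn q k + coordn r k * coordn g k.
have -> : frob_inner (U *m rect_diag_mx _ _ t *m V^T) M = \sum_(0 <= k < m.+1) t k * z k.
  rewrite frob_innerDr !frob_inner_svd_rank1 -big_split /=.
  by apply: eq_bigr => k _; rewrite mulrDr.
have MM : frob_inner M M = frob_inner a a * frob_inner b b + frob_inner c c * frob_inner e e.
  rewrite frob_innerDl !frob_innerDr !frob_inner_rank1 (frob_innerC c a) ac; ring.
have norm_le (x : 'cV[R]_m.+1) (y : 'cV[R]_n.+1) :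
    frob_inner x x * frob_inner y y <= frob_inner M M -> frob_norm x * frob_norm y <= F.
  by move=> le_M; rewrite /F /frob_norm -sqrtrM ?frob_inner_ge0 // ler_sqrt ?frob_inner_ge0.
apply: weighted_sum_le_top2 => // [|j].
  pose u : 'cV_m.+1 := U *m delta_mx 0 0; pose v : 'cV_n.+1 := V *m delta_mx 0 0.
  have coord0 k (W : 'M[R]_k.+1) (x : 'cV_k.+1) :
      coordn (W^T *m x) 0 = frob_inner (W *m delta_mx 0 0) x.
    by rewrite (coordn_ord _ ord0) frob_inner_mulmxl frob_innerC frob_inner_delta.
  have -> : z 0%N = frob_inner (u *m v^T) M.
    by rewrite frob_innerDr !frob_inner_rank1 /z !coord0.
  apply: le_trans (frob_inner_le _ _) _.
  rewrite /frob_norm frob_inner_rank1 !frob_inner_orthogonal ?orthogonal_mxT //.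
  by rewrite !frob_inner_delta !mxE eqxx mulr1 sqrtr1 mul1r.
have := sum_coordn_mul_le p q j; have := sum_coordn_mul_le r g j.
rewrite /p /q /r /g !frob_norm_orthogonal ?trmxK //.
have := norm_le a b; have := norm_le c e; rewrite MM lerDl lerDr !mulr_ge0 ?frob_inner_ge0 //.
rewrite big_split /=; lra.
Qed.

End RankTwo.

Section Main.
Variable R : rcfType.

Lemma sv_rank2_inner_le d1 d2 (Y : 'M[R]_(d1, d2)) (a c : 'cV[R]_d1) (b e : 'cV[R]_d2) :
  frob_inner a c = 0 ->
  frob_inner Y (a *m b^T + c *m e^T) <= (sv Y 0 + sv Y 1) * frob_norm (a *m b^T + c *m e^T).
Proof.
have [U [V [UU VV [sv_ge0 sv_noninc _] EY]]] := sv_svd Y.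
by rewrite {1}EY; exact: rank2_inner_le.
Qed.

Lemma rank2_orthogonal_decomposition m n (a c : 'cV[R]_m) (b e : 'cV[R]_n) :
  exists (b' : 'cV[R]_n) (c' : 'cV[R]_m),
    a *m b^T + c *m e^T = a *m b'^T + c' *m e^T /\ frob_inner a c' = 0.
Proof.
pose lam := frob_inner a c / frob_inner a a.
exists (b + lam *: e), (c - lam *: a); split.
  rewrite linearD /= linearZ /= mulmxDr mulmxBl -scalemxAr -scalemxAl.
  by rewrite addrACA subrr addr0.
have [aa0|aa_neq0] := eqVneq (frob_inner a a) 0.
  by move/eqP: aa0; rewrite frob_inner_eq0 => /eqP ->; rewrite frob_innerC frob_inner0r.
by rewrite frob_innerBr frob_innerZr divfK ?subrr.
Qed.

Lemma subdiff_inner_ge m n (F : 'M[R]_(m, n) -> R) (A Y : 'M[R]_(m, n)) :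
  subdiff F A Y -> F A - F 0 <= frob_inner Y A.
Proof. by move=> /(_ 0); rewrite sub0r frob_innerNr; lra. Qed.

End Main.

Theorem lemmaC1 (R : rcfType) (d1 d2 : nat)
    (f : 'rV[R]_(minn d1 d2) -> R)
    (wb : 'cV[R]_d1) (xb : 'cV[R]_d2) (kappa : R) :
  convex_fun f -> symmetric_fun f -> sign_invariant f ->
  0 < kappa ->
  (forall (w : 'cV[R]_d1) (x : 'cV[R]_d2),
     f_sigma f (w *m x^T - wb *m xb^T) - f_sigma f (wb *m xb^T - wb *m xb^T)
       >= kappa * frob_norm (w *m x^T - wb *m xb^T)) ->
  forall (w : 'cV[R]_d1) (x : 'cV[R]_d2) (Y : 'M[R]_(d1, d2)),
    w *m x^T != wb *m xb^T ->
    subdiff (f_sigma f) (w *m x^T - wb *m xb^T) Y ->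
    sv Y 0 + sv Y 1 >= kappa.
Proof.
move=> _ _ _ _ sharp w x Y neq_wx Ysub; set M := w *m x^T - wb *m xb^T.
have M_gt0 : 0 < frob_norm M by rewrite frob_norm_gt0 // subr_eq0.
have [b [c [EM wc]]] := rank2_orthogonal_decomposition w (- wb) x xb.
have Y_le : frob_inner Y M <= (sv Y 0 + sv Y 1) * frob_norm M.
  by rewrite /M -mulNmx EM; exact: sv_rank2_inner_le.
have := sharp w x; rewrite subrr -/M => growth.
have := subdiff_inner_ge Ysub; rewrite -/M => Y_ge.
by rewrite -(ler_pM2r M_gt0); apply: le_trans Y_le; lra.
Qed.
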